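(* Let $C=C_{\{\mathcal{I}_n,\mathcal{J}_n\}}$ be a nice Cantor set, let $0<c<1$ be a constant with $J_{n,i}\cap cI_{n,i}\neq\emptyset$ for all $n,i$, and assume $|J_{n,i}|<\frac{1-c}{3}|I_{n,i}|$ for all $n,i$. Then there is a constant $c'>0$ such that for any two distinct $J,J'\in\mathcal{J}$, if $K$ is the interval between $J$ and $J'$, then $|K|\ge c'\min\{|J|,|J'|\}$.
   Context: A Cantor construction $\{\mathcal{I}_n,\mathcal{J}_n\}_n$: for each $n\in\mathbb{N}$, $\mathcal{I}_n=\{I_{n,i}\}_i$ is a collection of closed intervals with mutually disjoint interiors and $\mathcal{J}_n=\{J_{n,i}\}_i$ a collection of open intervals with $J_{n,i}\subset I_{n,i}$, such that each $I_{n+1,i}$ is contained in some $I_{n,j}$, $\bigcup\mathcal{I}_{n+1}=\bigcup\mathcal{I}_n\setminus\bigcup\mathcal{J}_n$, $\sup_j|I_{n,j}|\to0$, and $\bigcup\mathcal{I}_1$ is bounded; $C=\bigcap_n\bigcup_iI_{n,i}$, $\mathcal{I}=\bigcup_n\mathcal{I}_n$, $\mathcal{J}=\bigcup_n\mathcal{J}_n$. Nice: there is $0<c<1$ with $cI_{n,i}\cap J_{n,i}\neq\emptyset$ for all $n,i$ ($cI$ the interval concentric with $I$ of length $c|I|$). *)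

From Stdlib Require Export Reals.
Open Scope R_scope.

(* Levels are indexed by n : nat,
   starting at 0 (the paper's level 1 is our level 0).
   I_{n,i} = [Ia n i, Ib n i]  (closed interval, Ia <= Ib)
   J_{n,i} = (Ja n i, Jb n i)  (open interval, Ja <= Jb)               *)

Definition inI (idx : nat -> Type) (Ia Ib : forall n, idx n -> R)
  (n : nat) (i : idx n) (x : R) : Prop := Ia n i <= x <= Ib n i.

Definition inJ (idx : nat -> Type) (Ja Jb : forall n, idx n -> R)
  (n : nat) (i : idx n) (x : R) : Prop := Ja n i < x < Jb n i.

Definition cantor_construction (idx : nat -> Type)
  (Ia Ib Ja Jb : forall n, idx n -> R) : Prop :=
  (forall n i, Ia n i <= Ib n i) /\
  (forall n i, Ja n i <= Jb n i) /\
  (forall n i x, inJ idx Ja Jb n i x -> inI idx Ia Ib n i x) /\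
  (forall n (i j : idx n), i <> j -> forall x,
      ~ ((Ia n i < x < Ib n i) /\ (Ia n j < x < Ib n j))) /\
  (forall n (i : idx (S n)), exists j : idx n,
      forall x, inI idx Ia Ib (S n) i x -> inI idx Ia Ib n j x) /\
  (forall n x, (exists i, inI idx Ia Ib (S n) i x) <->
     ((exists i, inI idx Ia Ib n i x) /\ ~ (exists i, inJ idx Ja Jb n i x))) /\
  (forall eps, 0 < eps -> exists N, forall n, (N <= n)%nat ->
      forall j, Ib n j - Ia n j <= eps) /\
  (exists M, forall i x, inI idx Ia Ib 0 i x -> Rabs x <= M).

(* the interval c I concentric with I of length c |I| meets J *)
Definition nice_with (idx : nat -> Type) (Ia Ib Ja Jb : forall n, idx n -> R)
  (c : R) : Prop :=
  0 < c < 1 /\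
  forall n i, exists x,
    (Ia n i + Ib n i) / 2 - c * (Ib n i - Ia n i) / 2 <= x <=
    (Ia n i + Ib n i) / 2 + c * (Ib n i - Ia n i) / 2 /\
    inJ idx Ja Jb n i x.

Definition nice (idx : nat -> Type) (Ia Ib Ja Jb : forall n, idx n -> R) : Prop :=
  exists c, nice_with idx Ia Ib Ja Jb c.

(* Niceness together with |J| < (1-c)/3 |I| leaves, inside each I, a margin longer
   than |J|/2 on both sides of its gap J.  Given two distinct gaps J = J_{n,i} left
   of J' = J_{m,k}, either I_{m,k} lies to the right of J (if n < m, since I_{m,k}
   sits inside I_{n+1} which avoids J_n; if n = m, by disjointness of interiors), or
   I_{n,i} lies to the left of J' (if m < n).  In both cases the interval between J
   and J' contains one of the margins, so c' = 1/2 works. *)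
From Stdlib Require Import Reals Lra Lia Arith.
Open Scope R_scope.

Lemma open_sub_closed_endpoints (u v a b : R) :
  u < v -> (forall x, u < x < v -> a <= x <= b) -> a <= u /\ v <= b.
Proof.
  intros Huv Hsub; split.
  - destruct (Rle_or_lt a u) as [Hau|Hua]; [exact Hau|].
    pose proof (Hsub ((u + Rmin a v) / 2)).
    unfold Rmin in *; destruct (Rle_dec a v); lra.
  - destruct (Rle_or_lt v b) as [Hvb|Hbv]; [exact Hvb|].
    pose proof (Hsub ((Rmax b u + v) / 2)).
    unfold Rmax in *; destruct (Rle_dec b u); lra.
Qed.

Lemma avoiding_interval_right (u v a b : R) :
  u < v -> v <= b -> (forall x, a < x < b -> ~ (u < x < v)) -> v <= a.
Proof.
  intros Huv Hvb Havoid.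
  destruct (Rle_or_lt v a) as [Hva|Hav]; [exact Hva|].
  exfalso; apply (Havoid ((Rmax a u + v) / 2));
    unfold Rmax; destruct (Rle_dec a u); lra.
Qed.

Lemma avoiding_interval_left (u v a b : R) :
  u < v -> a <= u -> (forall x, a < x < b -> ~ (u < x < v)) -> b <= u.
Proof.
  intros Huv Hau Havoid.
  destruct (Rle_or_lt b u) as [Hbu|Hub]; [exact Hbu|].
  exfalso; apply (Havoid ((u + Rmin b v) / 2));
    unfold Rmin; destruct (Rle_dec b v); lra.
Qed.

Lemma concentric_gap_margins (a b u v c x : R) :
  (a + b) / 2 - c * (b - a) / 2 <= x <= (a + b) / 2 + c * (b - a) / 2 ->
  u < x < v -> v - u < (1 - c) / 3 * (b - a) ->
  u - a > (v - u) / 2 /\ b - v > (v - u) / 2.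
Proof. intros Hx Hxuv Hsmall; split; lra. Qed.

Section CantorConstruction.

Variable idx : nat -> Type.
Variables Ia Ib Ja Jb : forall n, idx n -> R.
Hypothesis Hcc : cantor_construction idx Ia Ib Ja Jb.

Lemma gap_sub_endpoints n (i : idx n) :
  Ja n i < Jb n i -> Ia n i <= Ja n i /\ Jb n i <= Ib n i.
Proof.
  destruct Hcc as [_ [_ [Hsub _]]].
  intros HJ; apply open_sub_closed_endpoints; [exact HJ|].
  intros x Hx; exact (Hsub n i x Hx).
Qed.

Lemma deeper_interval_in_next_level n m (k : idx m) x :
  (n < m)%nat -> inI idx Ia Ib m k x -> exists j, inI idx Ia Ib (S n) j x.
Proof.
  destruct Hcc as [_ [_ [_ [_ [Hnest _]]]]].
  revert k x; induction m as [|m IH]; intros k x Hnm Hx; [lia|].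
  destruct (Nat.eq_dec n m) as [<-|Hne]; [now exists k|].
  destruct (Hnest m k) as [j Hj].
  exact (IH j x ltac:(lia) (Hj x Hx)).
Qed.

Lemma deeper_interval_avoids_gap n (i : idx n) m (k : idx m) x :
  (n < m)%nat -> inI idx Ia Ib m k x -> ~ inJ idx Ja Jb n i x.
Proof.
  destruct Hcc as [_ [_ [_ [_ [_ [Hunion _]]]]]].
  intros Hnm Hx HJ.
  apply (proj1 (Hunion n x) (deeper_interval_in_next_level n m k x Hnm Hx)).
  now exists i.
Qed.

Lemma gaps_separated n (i : idx n) m (k : idx m) :
  Ja n i < Jb n i -> Ja m k < Jb m k ->
  (Ja n i, Jb n i) <> (Ja m k, Jb m k) -> Jb n i <= Ja m k ->
  Jb n i <= Ia m k \/ Ib n i <= Ja m k.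
Proof.
  intros HJ HJ' Hne Hleft.
  destruct (gap_sub_endpoints n i HJ) as [Hai Hbi].
  destruct (gap_sub_endpoints m k HJ') as [Hak Hbk].
  destruct (lt_eq_lt_dec n m) as [[Hnm|<-]|Hmn].
  - left; apply (avoiding_interval_right (Ja n i) (Jb n i) _ (Ib m k)); [lra|lra|].
    intros x Hx; apply (deeper_interval_avoids_gap n i m k x Hnm).
    unfold inI; lra.
  - left; apply (avoiding_interval_right (Ja n i) (Jb n i) _ (Ib n k)); [lra|lra|].
    destruct Hcc as [_ [_ [_ [Hdisj _]]]].
    assert (Hik : i <> k) by (intros ->; exact (Hne eq_refl)).
    intros x Hx HxJ; apply (Hdisj n i k Hik x); lra.
  - right; apply (avoiding_interval_left (Ja m k) (Jb m k) (Ia n i)); [lra|lra|].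
    intros x Hx; apply (deeper_interval_avoids_gap m k n i x Hmn).
    unfold inI; lra.
Qed.

End CantorConstruction.

Theorem lemma5p4 (idx : nat -> Type) (Ia Ib Ja Jb : forall n, idx n -> R) (c : R) :
  cantor_construction idx Ia Ib Ja Jb ->
  nice idx Ia Ib Ja Jb ->
  nice_with idx Ia Ib Ja Jb c ->
  (forall n i, Jb n i - Ja n i < (1 - c) / 3 * (Ib n i - Ia n i)) ->
  exists c', 0 < c' /\
    forall n (i : idx n) m (k : idx m),
      (Ja n i, Jb n i) <> (Ja m k, Jb m k) ->
      (* J = J_{n,i} lies to the left of J' = J_{m,k}; K = [Jb n i, Ja m k] *)
      Jb n i <= Ja m k ->
      Ja m k - Jb n i >= c' * Rmin (Jb n i - Ja n i) (Jb m k - Ja m k).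
Proof.
  intros Hcc _ [_ Hmeets] Hsmall.
  assert (Hmargins : forall n i, Ja n i < Jb n i /\
            Ja n i - Ia n i > (Jb n i - Ja n i) / 2 /\
            Ib n i - Jb n i > (Jb n i - Ja n i) / 2).
  { intros n i; destruct (Hmeets n i) as [x [Hx HxJ]].
    unfold inJ in HxJ; split; [lra|].
    exact (concentric_gap_margins _ _ _ _ c x Hx HxJ (Hsmall n i)). }
  exists (1 / 2); split; [lra|].
  intros n i m k Hne Hleft.
  destruct (Hmargins n i) as [HJ [_ Hright_margin]].
  destruct (Hmargins m k) as [HJ' [Hleft_margin _]].
  pose proof (Rmin_l (Jb n i - Ja n i) (Jb m k - Ja m k)).
  pose proof (Rmin_r (Jb n i - Ja n i) (Jb m k - Ja m k)).
  destruct (gaps_separated idx Ia Ib Ja Jb Hcc n i m k HJ HJ' Hne Hleft); lra.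
Qed.
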